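(* Let $n\geq 1$ and $x^s\in\mathbb{C}^n\setminus\{0\}$. Define $g:\mathbb{C}^n\to\mathbb{R}$ by $$g(x)=\|x\|^4-\|x\|^2\|x^s\|^2-|\langle x,x^s\rangle|^2+\|x^s\|^4,$$ viewed as a smooth function of the $2n$ real coordinates of $x$ (identifying $\mathbb{C}^n$ with $\mathbb{R}^{2n}$). Then: (i) the set of points $x$ with $\nabla g(x)=0$ is exactly $E_1\cup E_2\cup E_3$, where $E_1=\{e^{i\theta}x^s:\theta\in\mathbb{R}\}$, $E_2=\{0\}$, and $E_3=\{x\in\mathbb{C}^n:\langle x^s,x\rangle=0,\ \|x\|=\|x^s\|/\sqrt{2}\}$; (ii) the set of points $x$ with $\nabla g(x)=0$ and $\nabla^2 g(x)\succeq 0$ (real Hessian positive semidefinite) is exactly $E_1$. In particular, $\nabla^2 g(0)\prec 0$ and, for every $x\in E_3$, the second derivative of $g$ at $x$ in the direction $x^s$ equals $-2\|x^s\|^4<0$.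
   Context: $\langle u,v\rangle=\sum_i \overline{u_i}v_i$ denotes the standard Hermitian product on $\mathbb{C}^n$ and $\|\cdot\|$ the associated Euclidean norm. (In the paper, $g$ is the expectation of the phase-retrieval loss $f(x)=\frac{1}{2m}\sum_{k=1}^m(|\langle x,v_k\rangle|^2-|\langle x^s,v_k\rangle|^2)^2$ over independent standard complex Gaussian measurement vectors $v_k$.) *)

From HB Require Import structures.
From mathcomp Require Import all_boot all_order all_algebra.
From mathcomp Require Import all_classical all_reals all_analysis.
From mathcomp Require Import complex.
Set Implicit Arguments. Unset Strict Implicit. Unset Printing Implicit Defensive.
Import Order.TTheory GRing.Theory Num.Theory.
Import numFieldNormedType.Exports.
Local Open Scope ring_scope.
Local Open Scope complex_scope.

Section Defs.
Variable R : realType.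
Variable n : nat.

Definition hprod (u v : 'rV[R[i]]_n) : R[i] := \sum_(j < n) (u 0 j)^* * v 0 j.

Definition cabs (z : R[i]) : R := Num.sqrt (complex.Re z ^+ 2 + complex.Im z ^+ 2).

Definition cnorm (x : 'rV[R[i]]_n) : R := Num.sqrt (complex.Re (hprod x x)).

Definition expi (t : R) : R[i] := cos t +i* sin t.

Definition gfun (xs x : 'rV[R[i]]_n) : R :=
  cnorm x ^+ 4 - cnorm x ^+ 2 * cnorm xs ^+ 2 - cabs (hprod x xs) ^+ 2
  + cnorm xs ^+ 4.

(* identification R^{2n} = C^n : first n coordinates = real parts,
   last n coordinates = imaginary parts *)
Definition toC (y : 'rV[R]_(n + n)) : 'rV[R[i]]_n :=
  \row_j (y 0 (lshift n j) +i* y 0 (rshift n j)).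
Definition ofC (x : 'rV[R[i]]_n) : 'rV[R]_(n + n) :=
  \row_k (match @fintype.split n n k with
          | inl j => complex.Re (x 0 j)
          | inr j => complex.Im (x 0 j) end).

Definition greal (xs : 'rV[R[i]]_n) (y : 'rV[R]_(n + n)) : R := gfun xs (toC y).

Definition ebasis (k : 'I_(n + n)) : 'rV[R]_(n + n) := delta_mx 0 k.

Definition gradient (f : 'rV[R]_(n + n) -> R) (y : 'rV[R]_(n + n)) : 'rV[R]_(n + n) :=
  \row_k ('D_(ebasis k) f y).
Definition hessian (f : 'rV[R]_(n + n) -> R) (y : 'rV[R]_(n + n)) : 'M[R]_(n + n) :=
  \matrix_(k, l) ('D_(ebasis k) (fun z => 'D_(ebasis l) f z) y).

Definition psd (H : 'M[R]_(n + n)) : Prop :=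
  forall v : 'rV[R]_(n + n), 0 <= (v *m H *m v^T) 0 0.
Definition negdef (H : 'M[R]_(n + n)) : Prop :=
  forall v : 'rV[R]_(n + n), v != 0 -> (v *m H *m v^T) 0 0 < 0.

Definition E1 (xs : 'rV[R[i]]_n) : set 'rV[R[i]]_n :=
  [set x | exists t : R, x = expi t *: xs].
Definition E2 : set 'rV[R[i]]_n := [set 0].
Definition E3 (xs : 'rV[R[i]]_n) : set 'rV[R[i]]_n :=
  [set x | hprod xs x = 0 /\ cnorm x = cnorm xs / Num.sqrt 2].

End Defs.

From HB Require Import structures.
From mathcomp Require Import all_boot all_order all_algebra.
From mathcomp Require Import all_classical all_reals all_analysis.
From mathcomp Require Import complex.
From mathcomp Require Import ring lra.
Import Order.TTheory GRing.Theory Num.Theory.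
Import numFieldNormedType.Exports.
Local Open Scope classical_set_scope.
Local Open Scope ring_scope.
Set Implicit Arguments. Unset Strict Implicit.

(* Identify C^n with R^(2n) through y = ofC x and put a = ofC xs and
   b = ofC (-i xs).  Then a and b are orthogonal with |a| = |b| > 0, and
   |<x,xs>|^2 = <y,a>^2 + <y,b>^2, so g becomes the real quartic
     G(y) = |y|^4 - |y|^2 |a|^2 - <y,a>^2 - <y,b>^2 + |a|^4.
   Along every line G is a polynomial in the parameter, so its first and
   second directional derivatives are computed exactly; the gradient is
     W(y) = (4|y|^2 - 2|a|^2) y - 2<y,a> a - 2<y,b> b.
   Projecting W(y) = 0 on a, b and y shows that the critical points are
   0, the circle {c a + d b | c^2 + d^2 = 1} (the orbit e^{it} xs), and
   the "equator" {y orthogonal to a, b with 2|y|^2 = |a|^2} (the set E3).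
   The Hessian form in direction a is -4|a|^4 at 0 and -2|a|^4 on the
   equator, whereas on the circle it is nonnegative by Bessel's inequality. *)

Lemma derive_quartic (R : realType) (V : normedModType R) (f : V -> R) (y v : V)
    (c1 c2 c3 c4 : R) :
  (forall h : R, f (h *: v + y) = f y + h * c1 + h ^+ 2 * c2 + h ^+ 3 * c3 + h ^+ 4 * c4) ->
  'D_v f y = c1.
Proof.
move=> f_line; rewrite /derive; apply: cvg_lim => //.
(* For h != 0 the difference quotient is q h, a polynomial continuous at 0. *)
pose q (h : R) := c1 + h * (c2 + h * (c3 + h * c4)).
have q_cont : q @ 0 --> c1.
  have -> : c1 = c1 + 0 * (c2 + 0 * (c3 + 0 * c4)) by rewrite !mul0r addr0.
  by apply: cvgD; [exact: cvg_cst|apply: cvgM; [exact: cvg_id|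
     apply: cvgD; [exact: cvg_cst|apply: cvgM; [exact: cvg_id|
     apply: cvgD; [exact: cvg_cst|apply: cvgM; [exact: cvg_id|exact: cvg_cst]]]]]].
have q_dcont : q @ 0^' --> c1 by exact: cvg_within_filter.
apply: cvg_trans q_dcont; apply: near_eq_cvg; near=> h.
have h_neq0 : h != 0 by near: h; exact: nbhs_dnbhs_neq.
rewrite /q /= f_line -[_ *: _]/(h^-1 * _).
by field.
Unshelve. all: by end_near.
Qed.

Section RealModel.
Variables (R : realType) (m : nat).
Local Notation V := 'rV[R]_m.

Definition dot (u w : V) : R := \sum_k u 0 k * w 0 k.

Lemma dotC (u w : V) : dot u w = dot w u.
Proof. by apply: eq_bigr => k _; rewrite mulrC. Qed.

Lemma dotDl (u v w : V) : dot (u + v) w = dot u w + dot v w.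
Proof. by rewrite /dot -big_split; apply: eq_bigr => k _; rewrite mxE mulrDl. Qed.

Lemma dotZl (c : R) (u w : V) : dot (c *: u) w = c * dot u w.
Proof. by rewrite /dot mulr_sumr; apply: eq_bigr => k _; rewrite mxE mulrA. Qed.

Lemma dotNl (u w : V) : dot (- u) w = - dot u w.
Proof. by rewrite -scaleN1r dotZl mulN1r. Qed.

Lemma dotDr (u v w : V) : dot w (u + v) = dot w u + dot w v.
Proof. by rewrite dotC dotDl !(dotC w). Qed.

Lemma dotZr (c : R) (u w : V) : dot w (c *: u) = c * dot w u.
Proof. by rewrite dotC dotZl dotC. Qed.

Lemma dotNr (u w : V) : dot w (- u) = - dot w u.
Proof. by rewrite dotC dotNl dotC. Qed.

Lemma dot0l (w : V) : dot 0 w = 0.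
Proof. by rewrite -(scale0r 0) dotZl mul0r. Qed.

Lemma dot_ge0 (u : V) : 0 <= dot u u.
Proof. by apply: sumr_ge0 => k _; rewrite -expr2 sqr_ge0. Qed.

Lemma dot_gt0 (u : V) : u != 0 -> 0 < dot u u.
Proof.
move=> u_neq0; rewrite lt_def dot_ge0 andbT; apply: contra u_neq0.
rewrite psumr_eq0 => [/allP u_null|k _]; last by rewrite -expr2 sqr_ge0.
apply/eqP/rowP => k; rewrite mxE; apply/eqP.
by have := u_null k (mem_index_enum k); rewrite /= mulf_eq0 orbb.
Qed.

Lemma dot_delta (w : V) (k : 'I_m) : dot w (delta_mx 0 k) = w 0 k.
Proof.
rewrite /dot (bigD1 k) //= big1 ?addr0 => [|l /negPf l_neq]; rewrite !mxE ?eqxx ?mulr1 //.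
by rewrite l_neq mulr0.
Qed.

Lemma dot_deltal (w : V) (k : 'I_m) : dot (delta_mx 0 k) w = w 0 k.
Proof. by rewrite dotC dot_delta. Qed.

Ltac dot_expand := rewrite ?(dotDl, dotDr, dotZl, dotZr, dotNl, dotNr).

Lemma gram_quadform (B : V -> V -> R) (L : V -> V) (v : V) :
  (forall u w, B u w = B w u) -> (forall u w, B u w = dot u (L w)) ->
  (v *m (\matrix_(k, l) B (delta_mx 0 k) (delta_mx 0 l)) *m v^T) 0 0 = B v v.
Proof.
move=> B_sym B_op; rewrite mxE [RHS]B_op dotC; apply: eq_bigr => l _.
rewrite [v^T _ _]mxE; congr (_ * _).
rewrite -[RHS]dot_deltal -B_op B_sym B_op mxE; apply: eq_bigr => k _.
by rewrite mxE B_op dot_deltal.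
Qed.

Section Quartic.
Variables a b : V.

Definition G (y : V) : R :=
  dot y y ^+ 2 - dot y y * dot a a - (dot y a ^+ 2 + dot y b ^+ 2) + dot a a ^+ 2.
Definition DG (y w : V) : R :=
  4 * dot y y * dot y w - 2 * dot a a * dot y w - 2 * dot y a * dot w a
  - 2 * dot y b * dot w b.
Definition D2 (y u w : V) : R :=
  8 * dot y u * dot y w + 4 * dot y y * dot u w - 2 * dot a a * dot u w
  - 2 * dot u a * dot w a - 2 * dot u b * dot w b.
Definition W (y : V) : V :=
  (4 * dot y y - 2 * dot a a) *: y - (2 * dot y a) *: a - (2 * dot y b) *: b.

(* Along a line, G and DG are polynomials of degree 4 and 3 in the parameter. *)
Lemma derive_G (y w : V) : 'D_w G y = DG y w.
Proof.
apply: (derive_quartic (c2 := 4 * dot y w ^+ 2 + 2 * dot y y * dot w w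
  - dot a a * dot w w - dot w a ^+ 2 - dot w b ^+ 2)
  (c3 := 4 * dot y w * dot w w) (c4 := dot w w ^+ 2)) => h.
rewrite /G /DG; dot_expand; rewrite (dotC w y); ring.
Qed.

Lemma derive_DG (y u w : V) : 'D_u (fun z => DG z w) y = D2 y u w.
Proof.
apply: (derive_quartic (c2 := 4 * (2 * dot y u * dot u w + dot u u * dot y w))
  (c3 := 4 * dot u u * dot u w) (c4 := 0)) => h.
rewrite /DG /D2; dot_expand; rewrite (dotC u y); ring.
Qed.

Lemma DG_dot (y w : V) : DG y w = dot (W y) w.
Proof. rewrite /DG /W; dot_expand; rewrite !(dotC w); ring. Qed.

Lemma D2C (y u w : V) : D2 y u w = D2 y w u.
Proof. rewrite /D2 (dotC u w); ring. Qed.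

Lemma D2_dot (y u w : V) :
  D2 y u w = dot u ((8 * dot y w) *: y + (4 * dot y y - 2 * dot a a) *: w
                    - (2 * dot w a) *: a - (2 * dot w b) *: b).
Proof. rewrite /D2; dot_expand; rewrite !(dotC u); ring. Qed.

Lemma hessian_quadform (y v : V) :
  (v *m (\matrix_(k, l) D2 y (delta_mx 0 k) (delta_mx 0 l)) *m v^T) 0 0 = D2 y v v.
Proof. exact: gram_quadform (D2C y) (D2_dot y). Qed.

Hypotheses (a_perp_b : dot a b = 0) (b_norm : dot b b = dot a a) (a_pos : 0 < dot a a).

Definition circle (y : V) : Prop :=
  exists c d : R, c ^+ 2 + d ^+ 2 = 1 /\ y = c *: a + d *: b.
Definition equator (y : V) : Prop :=
  dot y a = 0 /\ dot y b = 0 /\ 2 * dot y y = dot a a.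

Lemma circle_norm (y : V) : circle y -> dot y y = dot a a.
Proof.
case=> c [d [cd1 ->]]; dot_expand; rewrite a_perp_b (dotC b a) a_perp_b b_norm.
by rewrite -[RHS]mul1r -cd1; ring.
Qed.

Lemma W_dot_a (y : V) : dot (W y) a = 4 * (dot y y - dot a a) * dot y a.
Proof. rewrite /W; dot_expand; rewrite (dotC b a) a_perp_b; ring. Qed.

Lemma W_dot_b (y : V) : dot (W y) b = 4 * (dot y y - dot a a) * dot y b.
Proof. rewrite /W; dot_expand; rewrite a_perp_b b_norm; ring. Qed.

Lemma W_dot_y (y : V) :
  dot (W y) y = (4 * dot y y - 2 * dot a a) * dot y y - 2 * (dot y a ^+ 2 + dot y b ^+ 2).
Proof. rewrite /W; dot_expand; rewrite (dotC a y) (dotC b y); ring. Qed.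

(* A critical point of norm different from |a| is 0 or on the equator:
   the a- and b-components of W force y to be orthogonal to a and b. *)
Lemma critical_off_circle (y : V) :
  W y = 0 -> dot y y != dot a a -> y = 0 \/ equator y.
Proof.
move=> Wy0 y_norm.
have scale_neq0 : 4 * (dot y y - dot a a) != 0 by rewrite mulf_neq0 ?pnatr_eq0 ?subr_eq0.
have ya0 : dot y a = 0.
  by have := W_dot_a y; rewrite Wy0 dot0l => /esym/eqP; rewrite mulf_eq0 (negPf scale_neq0) => /eqP.
have yb0 : dot y b = 0.
  by have := W_dot_b y; rewrite Wy0 dot0l => /esym/eqP; rewrite mulf_eq0 (negPf scale_neq0) => /eqP.
move/eqP: Wy0; rewrite /W ya0 yb0 !mulr0 !scale0r !subr0 scaler_eq0.
by case/orP => /eqP; [right; split; [|split] => //; lra|left].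
Qed.

(* A critical point of norm |a| is the combination <y,a>/|a|^2 a + <y,b>/|a|^2 b,
   and its y-component gives c^2 + d^2 = 1. *)
Lemma critical_on_circle (y : V) : W y = 0 -> dot y y = dot a a -> circle y.
Proof.
move=> Wy0 y_norm; have a_neq0 : dot a a != 0 by rewrite gt_eqF.
exists (dot y a / dot a a), (dot y b / dot a a); split.
  have : dot (W y) y = 0 by rewrite Wy0 dot0l.
  rewrite W_dot_y y_norm => proj0.
  rewrite !expr_div_n -mulrDl (_ : _ + _ = dot a a ^+ 2); last by nra.
  by rewrite divff // expf_neq0.
have two_a_neq0 : 2 * dot a a != 0 by rewrite mulf_neq0 ?pnatr_eq0.
have y_comb : (2 * dot a a) *: y = (2 * dot y a) *: a + (2 * dot y b) *: b.
  apply/eqP; rewrite -subr_eq0 opprD addrA -Wy0 /W y_norm.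
  by rewrite (_ : 4 * dot a a - 2 * dot a a = 2 * dot a a) //; ring.
apply: (scalerI two_a_neq0); rewrite y_comb scalerDr !scalerA.
by congr (_ *: _ + _ *: _); field.
Qed.

Lemma critical_pointsE (y : V) : W y = 0 <-> (circle y \/ y = 0) \/ equator y.
Proof.
split=> [Wy0|[[y_circ|->]|]].
- have [y_norm|y_norm] := eqVneq (dot y y) (dot a a).
    by left; left; exact: critical_on_circle.
  by case: (critical_off_circle Wy0 y_norm) => ?; [left; right|right].
- case: y_circ (circle_norm y_circ) => c [d [_ y_def]] y_norm.
  have ya : dot y a = c * dot a a by rewrite y_def; dot_expand; rewrite (dotC b a) a_perp_b; ring.
  have yb : dot y b = d * dot a a by rewrite y_def; dot_expand; rewrite a_perp_b b_norm; ring.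
  rewrite /W y_norm ya yb {1}y_def scalerDr !scalerA.
  rewrite (_ : _ * c = 2 * (c * dot a a)); last by ring.
  rewrite (_ : _ * d = 2 * (d * dot a a)); last by ring.
  by rewrite addrAC addrK subrr.
- by rewrite /W !dot0l !mulr0 !scale0r scaler0 !subr0.
- case=> ya0 [yb0 y_norm].
  by rewrite /W ya0 yb0 !mulr0 (_ : 4 * dot y y - 2 * dot a a = 0) ?scale0r ?subr0 //; lra.
Qed.

Lemma bessel (v : V) : dot v a ^+ 2 + dot v b ^+ 2 <= dot a a * dot v v.
Proof.
have := dot_ge0 (dot a a *: v - dot v a *: a - dot v b *: b).
dot_expand; rewrite a_perp_b b_norm (dotC b a) a_perp_b (dotC a v) (dotC b v).
set res := (X in 0 <= X -> _).
have -> : res = dot a a * (dot a a * dot v v - (dot v a ^+ 2 + dot v b ^+ 2)) by rewrite /res; ring.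
by rewrite pmulr_rge0 // subr_ge0.
Qed.

Lemma D2_circle_ge0 (y v : V) : circle y -> 0 <= D2 y v v.
Proof.
move=> /circle_norm y_norm; rewrite /D2 y_norm.
have := bessel v; have := sqr_ge0 (dot y v); nra.
Qed.

Lemma D2_zero_lt0 (v : V) : v != 0 -> D2 0 v v < 0.
Proof.
move=> /dot_gt0 v_pos; rewrite /D2 !dot0l.
have := mulr_gt0 a_pos v_pos; have := sqr_ge0 (dot v a); have := sqr_ge0 (dot v b).
nra.
Qed.

Lemma D2_equator (y : V) : equator y -> D2 y a a = - 2 * dot a a ^+ 2.
Proof. by case=> ya0 [yb0 y_norm]; rewrite /D2 ya0 a_perp_b; nra. Qed.

Lemma critical_curved_circle (y : V) : W y = 0 -> 0 <= D2 y a a -> circle y.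
Proof.
have a_neq0 : a != 0 by apply: contraTneq a_pos => ->; rewrite dot0l ltxx.
case/critical_pointsE => [[//|->]|/D2_equator ->].
  by rewrite leNgt D2_zero_lt0.
by rewrite mulNr oppr_ge0 lt_geF // mulr_gt0 // exprn_gt0.
Qed.

End Quartic.
End RealModel.

Section ComplexToReal.
Variables (R : realType) (n : nat).
Local Notation V := 'rV[R]_(n + n).
Local Notation C := 'rV[R[i]]_n.

Lemma split_lshift (j : 'I_n) : fintype.split (lshift n j) = inl j.
Proof. exact: (@unsplitK n n (inl j)). Qed.

Lemma split_rshift (j : 'I_n) : fintype.split (rshift n j) = inr j.
Proof. exact: (@unsplitK n n (inr j)). Qed.

Lemma dot_split (u w : V) : dot u w =
  \sum_(j < n) (u 0 (lshift n j) * w 0 (lshift n j) + u 0 (rshift n j) * w 0 (rshift n j)).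
Proof. by rewrite /dot big_split_ord /= -big_split. Qed.

Lemma ofCK (y : V) : ofC (toC y) = y.
Proof.
apply/rowP => k; rewrite !mxE; case: splitP => j /= k_def; rewrite mxE /=;
  by congr (y 0 _); apply/val_inj.
Qed.

Lemma toCK (x : C) : toC (ofC x) = x.
Proof. by apply/rowP => j; rewrite !mxE split_lshift split_rshift; case: (x 0 j). Qed.

Lemma ofC_inj : injective (@ofC R n).
Proof. exact: can_inj toCK. Qed.

Lemma ofC0 : ofC (0 : C) = 0.
Proof. by apply/rowP => k; rewrite !mxE; case: (fintype.split k) => j; rewrite mxE. Qed.

Lemma ofC_eq0 (x : C) : ofC x = 0 <-> x = 0.
Proof. by split=> [|->]; [rewrite -ofC0 => /ofC_inj|exact: ofC0]. Qed.

Lemma ofC_norm_gt0 (x : C) : x != 0 -> 0 < dot (ofC x) (ofC x).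
Proof. by move=> x_neq0; apply: dot_gt0; apply: contra x_neq0 => /eqP /ofC_eq0 ->. Qed.

(* The real coordinates of -i x. *)
Definition ofCrot (x : C) : V := \row_k (match fintype.split k with
  | inl j => complex.Im (x 0 j)
  | inr j => - complex.Re (x 0 j) end).

Lemma ofCZ (z : R[i]) (x : C) :
  ofC (z *: x) = complex.Re z *: ofC x - complex.Im z *: ofCrot x.
Proof.
apply/rowP => k; rewrite !mxE; case: (fintype.split k) => j; rewrite !mxE;
  case: z => p q; case: (x 0 j) => r s /=; ring.
Qed.

Lemma ofCrot_perp (x : C) : dot (ofC x) (ofCrot x) = 0.
Proof. by rewrite dot_split big1 // => j _; rewrite !mxE split_lshift split_rshift; ring. Qed.

Lemma ofCrot_norm (x : C) : dot (ofCrot x) (ofCrot x) = dot (ofC x) (ofC x).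
Proof.
by rewrite !dot_split; apply: eq_bigr => j _; rewrite !mxE split_lshift split_rshift; ring.
Qed.

Lemma Re_hprod (x w : C) : complex.Re (hprod x w) = dot (ofC x) (ofC w).
Proof.
rewrite /hprod (raddf_sum (@complex.Re R : Rcomplex R -> R)) dot_split.
by apply: eq_bigr => j _; rewrite !mxE split_lshift split_rshift; case: (w 0 j) (x 0 j) => p q [r s] /=; ring.
Qed.

Lemma Im_hprod (x w : C) : complex.Im (hprod x w) = dot (ofC x) (ofCrot w).
Proof.
rewrite /hprod (raddf_sum (@complex.Im R : Rcomplex R -> R)) dot_split.
by apply: eq_bigr => j _; rewrite !mxE split_lshift split_rshift; case: (w 0 j) (x 0 j) => p q [r s] /=; ring.
Qed.

Lemma cnorm_sq (x : C) : cnorm x ^+ 2 = dot (ofC x) (ofC x).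
Proof. by rewrite /cnorm Re_hprod sqr_sqrtr // dot_ge0. Qed.

Lemma cabs_sq (z : R[i]) : cabs z ^+ 2 = complex.Re z ^+ 2 + complex.Im z ^+ 2.
Proof. by rewrite /cabs sqr_sqrtr // addr_ge0 // sqr_ge0. Qed.

Lemma hprod_conj (u v : C) : hprod u v = (hprod v u)^*%C.
Proof.
rewrite /hprod rmorph_sum; apply: eq_bigr => j _.
case: (u 0 j) => p q; case: (v 0 j) => r s.
by apply/eqP; rewrite eq_complex /=; apply/andP; split; apply/eqP; ring.
Qed.

Lemma unit_circle_angle (c d : R) :
  c ^+ 2 + d ^+ 2 = 1 -> exists t : R, cos t = c /\ sin t = d.
Proof.
move=> cd1; have c_range : -1 <= c <= 1 by apply/andP; split; nra.
have cos_acos : cos (acos c) = c by rewrite acosK // in_itv.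
have sin_acos : sin (acos c) = `|d| by rewrite sin_acos // -sqrtr_sqr; congr Num.sqrt; lra.
have [d_ge0|d_lt0] := leP 0 d.
  by exists (acos c); rewrite cos_acos sin_acos ger0_norm.
by exists (- acos c); rewrite cosN sinN cos_acos sin_acos ltr0_norm ?opprK.
Qed.

Variable xs : C.
Local Notation a := (ofC xs).
Local Notation b := (ofCrot xs).

Lemma greal_G : greal xs = G a b.
Proof.
apply: funext => y; rewrite /greal /gfun /G -(ofCK y) toCK.
by rewrite -!cnorm_sq -!exprM cabs_sq Re_hprod Im_hprod.
Qed.

Lemma gradientE (y : V) : gradient (greal xs) y = W a b y.
Proof. by apply/rowP => k; rewrite greal_G mxE derive_G DG_dot dot_delta. Qed.

Lemma derive2E (y u w : V) :
  'D_u (fun z => 'D_w (greal xs) z) y = D2 a b y u w.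
Proof.
rewrite greal_G (_ : (fun z => _) = fun z => DG a b z w) ?derive_DG //.
by apply: funext => z; rewrite derive_G.
Qed.

Lemma hessianE (y : V) :
  hessian (greal xs) y = \matrix_(k, l) D2 a b y (delta_mx 0 k) (delta_mx 0 l).
Proof. by apply/matrixP => k l; rewrite !mxE derive2E. Qed.

Lemma hprod_eq0 (x : C) : hprod xs x = 0 <-> dot (ofC x) a = 0 /\ dot (ofC x) b = 0.
Proof.
rewrite hprod_conj -Re_hprod -Im_hprod.
split=> [|[re0 im0]]; last by rewrite (complexE (hprod x xs)) re0 im0 mulr0 addr0 conjc0.
move=> /(congr1 (@conjc R)); rewrite conjcK conjc0 => ->; split; reflexivity.
Qed.

Lemma E3_equator (x : C) : E3 xs x <-> equator a b (ofC x).
Proof.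
rewrite /E3 /equator /= hprod_eq0.
have sqrt2_sq : Num.sqrt 2 ^+ 2 = 2 :> R by rewrite sqr_sqrtr ?ler0n.
have norm_iff : cnorm x = cnorm xs / Num.sqrt 2 <-> 2 * dot (ofC x) (ofC x) = dot a a.
  rewrite -!cnorm_sq; split=> [->|norm_sq].
    by rewrite expr_div_n sqrt2_sq; field.
  have sq_eq : cnorm x ^+ 2 = (cnorm xs / Num.sqrt 2) ^+ 2.
    by rewrite expr_div_n sqrt2_sq -norm_sq; field.
  by move/eqP: sq_eq; rewrite eqrXn2 ?divr_ge0 ?sqrtr_ge0 // => /eqP.
by move: norm_iff; tauto.
Qed.

(* E1 is the circle of the real model: e^{it} xs = cos t a - sin t b. *)
Lemma E1_circle (x : C) : E1 xs x <-> circle a b (ofC x).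
Proof.
split=> [[t ->]|[c [d [cd1 x_def]]]].
  by exists (cos t), (- sin t); rewrite sqrrN cos2Dsin2 ofCZ scaleNr.
have [t [cos_t sin_t]] : exists t : R, cos t = c /\ sin t = - d.
  by apply: unit_circle_angle; rewrite sqrrN.
by exists t; apply: ofC_inj; rewrite ofCZ x_def /= cos_t sin_t scaleNr opprK.
Qed.

Lemma critical_setE (x : C) : xs != 0 ->
  gradient (greal xs) (ofC x) = 0 <-> (E1 xs `|` @E2 R n `|` E3 xs) x.
Proof.
move=> /ofC_norm_gt0 a_pos; have := ofC_eq0 x.
have := critical_pointsE (ofCrot_perp xs) (ofCrot_norm xs) a_pos (ofC x).
have := E1_circle x; have := E3_equator x.
rewrite gradientE /setU /E2 /=; tauto.
Qed.

End ComplexToReal.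

Theorem mainTheorem2 (R : realType) (n : nat) (hn : (0 < n)%N)
    (xs : 'rV[R[i]]_n) (hxs : xs != 0) :
  (* (i) critical points *)
  (forall x : 'rV[R[i]]_n,
      gradient (greal xs) (ofC x) = 0 <-> (E1 xs `|` @E2 R n `|` E3 xs) x) /\
  (* (ii) second-order critical points *)
  (forall x : 'rV[R[i]]_n,
      (gradient (greal xs) (ofC x) = 0 /\ psd (hessian (greal xs) (ofC x)))
        <-> E1 xs x) /\
  (* Hessian at 0 is negative definite *)
  negdef (hessian (greal xs) 0) /\
  (* second derivative in direction xs on E3 *)
  (forall x : 'rV[R[i]]_n, E3 xs x ->
      'D_(ofC xs) (fun z => 'D_(ofC xs) (greal xs) z) (ofC x)
        = - 2 * cnorm xs ^+ 4).
Proof.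
have a_perp_b := ofCrot_perp xs; have b_norm := ofCrot_norm xs.
have a_pos := ofC_norm_gt0 hxs.
split; first by move=> x; exact: critical_setE.
split.
  move=> x; split=> [[crit psd_H]|x_E1].
    apply/E1_circle/(critical_curved_circle a_perp_b b_norm a_pos).
      by rewrite -gradientE.
    by have := psd_H (ofC xs); rewrite hessianE hessian_quadform.
  split; first by apply/critical_setE => //; left; left.
  by move=> v; rewrite hessianE hessian_quadform; apply: D2_circle_ge0 => //; exact/E1_circle.
split; first by move=> v v_neq0; rewrite hessianE hessian_quadform D2_zero_lt0.
move=> x /E3_equator x_eq.
by rewrite derive2E (D2_equator a_perp_b) // -cnorm_sq -exprM.
Qed.
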